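(* Let $m=2k+1$ with $k\in\mathbb{N}$ and $\beta\in[\frac{2k+3}{2},\frac{k+1+\sqrt{k^2+6k+5}}{2})$. Let $i\in\{1,\ldots,m-1\}$ and let $x$ lie in the $i$-th fixed digit interval $[\frac{(i-1)\beta+m-(i-1)}{\beta(\beta-1)},\frac{i+1}{\beta}]$. If $i\in\{1,\ldots,k\}$ then $T_{\beta,i}(x)<\frac{k\beta+m-k}{\beta(\beta-1)}$, and if $i\in\{k+1,\ldots,m-1\}$ then $T_{\beta,i}(x)>\frac{k+1}{\beta}$.
   Context: $T_{\beta,i}(x)=\beta x-i$. *)

From Stdlib Require Import Reals Lra Lia.
Open Scope R_scope.

Definition T (beta : R) (i : nat) (x : R) : R := beta * x - INR i.

(* Both bounds reduce to the single quadratic inequality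
   beta^2 - (k+1) beta - (k+1) < 0, which is exactly the upper bound on beta.
   Indeed T_{beta,i} x <= 1 on the whole digit interval, and 1 lies below the
   first target bound iff the quadratic is negative; and T_{beta,i} x is at
   least (2k+2-beta)/(beta-1) there, which exceeds (k+1)/beta iff the
   quadratic is negative.  In particular neither case needs its restriction
   on i. *)

From Stdlib Require Import Reals Lra Lia.
Open Scope R_scope.

Lemma quadratic_neg_below_root (p q beta : R) :
  0 <= p ^ 2 + 4 * q -> p / 2 <= beta ->
  beta < (p + sqrt (p ^ 2 + 4 * q)) / 2 ->
  beta ^ 2 - p * beta - q < 0.
Proof.
  intros Hdisc Hlow Hup.
  set (s := sqrt (p ^ 2 + 4 * q)) in *.
  assert (Hss : s * s = p ^ 2 + 4 * q) by (apply sqrt_sqrt; exact Hdisc).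
  assert (0 <= 2 * beta - p < s) by lra.
  nra.
Qed.

Lemma T_le_1 (beta : R) (i : nat) (x : R) :
  0 < beta -> x <= (INR i + 1) / beta -> T beta i x <= 1.
Proof.
  intros Hb Hx; unfold T.
  apply (Rmult_le_compat_l beta) in Hx; [|lra].
  replace (beta * ((INR i + 1) / beta)) with (INR i + 1) in Hx by (field; lra).
  lra.
Qed.

Lemma T_ge_digit_lower (beta c : R) (i : nat) (x : R) :
  1 < beta ->
  ((INR i - 1) * beta + c - (INR i - 1)) / (beta * (beta - 1)) <= x ->
  (c - (beta - 1)) / (beta - 1) <= T beta i x.
Proof.
  intros Hb Hx; unfold T.
  assert (HD : 0 < beta * (beta - 1)) by nra.
  apply (Rmult_le_compat_l (beta * (beta - 1))) in Hx; [|lra].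
  replace (beta * (beta - 1) * (((INR i - 1) * beta + c - (INR i - 1))
             / (beta * (beta - 1))))
    with ((INR i - 1) * beta + c - (INR i - 1)) in Hx by (field; lra).
  apply (Rmult_le_reg_r (beta - 1)); [lra|].
  replace ((c - (beta - 1)) / (beta - 1) * (beta - 1)) with (c - (beta - 1))
    by (field; lra).
  nra.
Qed.

Section QuadraticBound.

Variables (K beta : R).
Hypothesis beta_gt_1 : 1 < beta.
Hypothesis quadratic_neg : beta ^ 2 - (K + 1) * beta - (K + 1) < 0.

Lemma one_lt_upper_target :
  1 < (K * beta + (2 * K + 1) - K) / (beta * (beta - 1)).
Proof.
  assert (HD : 0 < beta * (beta - 1)) by nra.
  apply (Rmult_lt_reg_r (beta * (beta - 1))); [exact HD|].
  replace ((K * beta + (2 * K + 1) - K) / (beta * (beta - 1)) * (beta * (beta - 1)))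
    with (K * beta + (2 * K + 1) - K) by (field; lra).
  nra.
Qed.

Lemma lower_target_lt :
  (K + 1) / beta < (2 * K + 1 - (beta - 1)) / (beta - 1).
Proof.
  assert (HD : 0 < beta * (beta - 1)) by nra.
  apply (Rmult_lt_reg_r (beta * (beta - 1))); [exact HD|].
  replace ((K + 1) / beta * (beta * (beta - 1))) with ((K + 1) * (beta - 1))
    by (field; lra).
  replace ((2 * K + 1 - (beta - 1)) / (beta - 1) * (beta * (beta - 1)))
    with ((2 * K + 2 - beta) * beta) by (field; lra).
  nra.
Qed.

End QuadraticBound.

Theorem lemma3p5 (k : nat) (beta : R) (i : nat) (x : R) :
  let m := (2 * k + 1)%nat in
  (2 * INR k + 3) / 2 <= beta ->
  beta < (INR k + 1 + sqrt (INR k ^ 2 + 6 * INR k + 5)) / 2 ->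
  (1 <= i <= m - 1)%nat ->
  ((INR i - 1) * beta + INR m - (INR i - 1)) / (beta * (beta - 1)) <= x ->
  x <= (INR i + 1) / beta ->
  ((i <= k)%nat -> T beta i x < (INR k * beta + INR m - INR k) / (beta * (beta - 1))) /\
  ((k + 1 <= i)%nat -> T beta i x > (INR k + 1) / beta).
Proof.
  intros m Hlow Hup _ Hx_low Hx_up.
  assert (Hk : 0 <= INR k) by apply pos_INR.
  assert (Hm : INR m = 2 * INR k + 1).
  { unfold m; rewrite plus_INR, mult_INR; simpl; lra. }
  rewrite Hm in *.
  assert (Hb : 1 < beta) by lra.
  assert (Hq : beta ^ 2 - (INR k + 1) * beta - (INR k + 1) < 0).
  { apply quadratic_neg_below_root; [nra | lra |].
    replace ((INR k + 1) ^ 2 + 4 * (INR k + 1))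
      with (INR k ^ 2 + 6 * INR k + 5) by ring.
    exact Hup. }
  split; intros _.
  - pose proof (T_le_1 beta i x ltac:(lra) Hx_up).
    pose proof (one_lt_upper_target (INR k) beta Hb Hq).
    lra.
  - pose proof (T_ge_digit_lower beta (2 * INR k + 1) i x Hb Hx_low).
    pose proof (lower_target_lt (INR k) beta Hb Hq).
    lra.
Qed.
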